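(* Let $0<b\le c$ and let $\mu$ be a real number in $[\lambda_-(b),\lambda_+(b)]$. Then $\zeta_{(\mu,c)}$ is defined, $\int_0^c\zeta_{(\mu,c)}-\int_0^b\zeta_{(\mu,b)}=\mu(c-b)$, and $\zeta_{(\mu,c)}^{-1}(\{\mu\})$ is a closed interval of length at least $c-b$.
   Context: Fix $\kappa_0\in(0,1)$ and $r_0,r_b\in\mathbb{R}$ (the same $r_b$ is used for every value of the right endpoint). Let $F(u)=u/\sqrt{1-u^2}$ for $|u|<1$, $F(u)=+\infty$ for $u\ge1$, $F(u)=-\infty$ for $u\le-1$; $s_0=r_0/\sqrt{1+r_0^2}$, $s_b=r_b/\sqrt{1+r_b^2}$. Define $g_\pm(x)=F(\pm\kappa_0x+s_0)$ and, for each $c>0$, $h^c_\pm(x)=F(\mp\kappa_0(x-c)+s_b)$. $\lambda_+(c)$ is the common real value of $g_+$ and $h^c_+$ at the point where their graphs meet, or $+\infty$ if they do not meet; $\lambda_-(c)$ likewise for $g_-,h^c_-$, or $-\infty$. Assume there exists an absolutely continuous $f:[0,b]\to\mathbb{R}$ with $f'\in L^2$, $|f'|\le\kappa_0(1+f^2)^{3/2}$ a.e., $f(0)=r_0$, $f(b)=r_b$. For $c>0$ and real $\mu\in[\lambda_-(c),\lambda_+(c)]$, $\zeta_{(\mu,c)}:[0,c]\to\mathbb{R}$ is $\zeta_{(\mu,c)}(x)=\operatorname{mid}\big(h^c_-(x),g_-(x),\mu,g_+(x),h^c_+(x)\big)$, the median of five extended reals. *)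

From Stdlib Require Import Reals Lra List ClassicalEpsilon.
Import ListNotations.
Open Scope R_scope.

Inductive ER : Type := Fin (r : R) | PInf | NInf.

Definition ER_leb (x y : ER) : bool :=
  match x, y with
  | NInf, _ => true
  | _, PInf => true
  | PInf, _ => false
  | _, NInf => false
  | Fin a, Fin b => if Rle_dec a b then true else false
  end.

Definition ER_le (x y : ER) : Prop := ER_leb x y = true.

Fixpoint ER_insert (x : ER) (l : list ER) : list ER :=
  match l with
  | [] => [x]
  | y :: l' => if ER_leb x y then x :: y :: l' else y :: ER_insert x l'
  end.

Fixpoint ER_sort (l : list ER) : list ER :=
  match l with
  | [] => []
  | x :: l' => ER_insert x (ER_sort l')
  end.

Definition mid5 (a b c d e : ER) : ER := nth 2 (ER_sort [a; b; c; d; e]) NInf.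

Definition ER_to_R (x : ER) : R := match x with Fin r => r | _ => 0 end.

Definition Fext (u : R) : ER :=
  if Rlt_dec u 1 then
    (if Rlt_dec (-1) u then Fin (u / sqrt (1 - u ^ 2)) else NInf)
  else PInf.

Definition sof (r : R) : R := r / sqrt (1 + r ^ 2).

Definition g_plus (k0 r0 x : R) : ER := Fext (k0 * x + sof r0).
Definition g_minus (k0 r0 x : R) : ER := Fext (- k0 * x + sof r0).
Definition h_plus (k0 rb c x : R) : ER := Fext (- k0 * (x - c) + sof rb).
Definition h_minus (k0 rb c x : R) : ER := Fext (k0 * (x - c) + sof rb).

Definition meet_value (g h : R -> ER) (dflt : ER) : ER :=
  match excluded_middle_informative
          (exists v : R, exists x : R, g x = Fin v /\ h x = Fin v) with
  | left H => Fin (proj1_sig (constructive_indefinite_description _ H))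
  | right _ => dflt
  end.

Definition lam_plus (k0 r0 rb c : R) : ER :=
  meet_value (g_plus k0 r0) (h_plus k0 rb c) PInf.
Definition lam_minus (k0 r0 rb c : R) : ER :=
  meet_value (g_minus k0 r0) (h_minus k0 rb c) NInf.

Definition zeta (k0 r0 rb mu c x : R) : ER :=
  mid5 (h_minus k0 rb c x) (g_minus k0 r0 x) (Fin mu) (g_plus k0 r0 x) (h_plus k0 rb c x).

Definition zetaR (k0 r0 rb mu c : R) : R -> R := fun x => ER_to_R (zeta k0 r0 rb mu c x).

(** Write [s0 = sof r0], [sb = sof rb], [m = sof mu] and [t = k0 x].  Since [F] is increasing
    and [mu = F m], the median defining [zeta_(mu,c)] is [F] applied to the median of the five
    arguments of [F]; as long as [|sb - s0| <= k0 c] (the curvature bound on [f] gives [k0 b],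
    by the mean value theorem applied to [sof o f]), this median is the clamp of [m] between
    the two tent functions [max (t - k0 c + sb) (s0 - t)] and [min (t + s0) (k0 c + sb - t)].
    Together with that bound, the hypothesis on [mu] says [|m - s0| + |m - sb| <= k0 b], and
    then the clamp equals [m] exactly on [|m - s0| <= t <= k0 c - |m - sb|].  Enlarging [c] to
    [c'] leaves the profile unchanged to the left of this plateau, translates it by [c' - c] to
    the right of it, and lengthens the plateau by [c' - c]: this gives both the integral
    identity and the length of the level set. *)
From Stdlib Require Import Reals Lra ClassicalEpsilon.
From Coquelicot Require Import Coquelicot.
Open Scope R_scope.

(* An order embedding of [ER] into [[-1, 1]], to decide comparisons of extended reals by [lra]. *)
Definition ER_squash (x : ER) : R :=
  match x with Fin r => r / (1 + Rabs r) | PInf => 1 | NInf => -1 end.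

Lemma squash_Fin_bounds r : -1 < r / (1 + Rabs r) < 1.
Proof.
  assert (H : 0 < 1 + Rabs r) by (pose proof (Rabs_pos r); lra).
  split; apply Rmult_lt_reg_r with (1 + Rabs r); auto;
    unfold Rdiv; rewrite Rmult_assoc, Rinv_l by lra;
    unfold Rabs; destruct Rcase_abs; lra.
Qed.

Lemma squash_Fin_lt r s : r < s -> r / (1 + Rabs r) < s / (1 + Rabs s).
Proof.
  intros Hrs.
  assert (H1 : 0 < 1 + Rabs r) by (pose proof (Rabs_pos r); lra).
  assert (H2 : 0 < 1 + Rabs s) by (pose proof (Rabs_pos s); lra).
  assert (E : s / (1 + Rabs s) - r / (1 + Rabs r)
              = (s * (1 + Rabs r) - r * (1 + Rabs s)) / ((1 + Rabs r) * (1 + Rabs s)))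
    by (field; lra).
  enough (0 < (s * (1 + Rabs r) - r * (1 + Rabs s)) / ((1 + Rabs r) * (1 + Rabs s))) by lra.
  apply Rdiv_lt_0_compat; [|nra].
  unfold Rabs; destruct (Rcase_abs r), (Rcase_abs s); nra.
Qed.

Lemma ER_leb_squash x y : ER_leb x y = true -> ER_squash x <= ER_squash y.
Proof.
  destruct x as [r| |], y as [s| |]; simpl; intros H; try discriminate;
    try pose proof (squash_Fin_bounds r); try pose proof (squash_Fin_bounds s); try lra.
  destruct (Rle_dec r s) as [[Hlt| ->]|]; try discriminate; [|lra].
  now apply Rlt_le, squash_Fin_lt.
Qed.

Lemma ER_leb_false_squash x y : ER_leb x y = false -> ER_squash y < ER_squash x.
Proof.
  destruct x as [r| |], y as [s| |]; simpl; intros H; try discriminate;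
    try pose proof (squash_Fin_bounds r); try pose proof (squash_Fin_bounds s); try lra.
  destruct (Rle_dec r s); try discriminate.
  apply squash_Fin_lt; lra.
Qed.

Lemma ER_squash_inj x y : ER_squash x = ER_squash y -> x = y.
Proof.
  destruct x as [r| |], y as [s| |]; simpl; intros H;
    try pose proof (squash_Fin_bounds r); try pose proof (squash_Fin_bounds s); try lra; auto.
  destruct (Rtotal_order r s) as [h|[ ->|h]]; auto;
    pose proof (squash_Fin_lt _ _ h); lra.
Qed.

Definition ER_max (x y : ER) : ER := if ER_leb x y then y else x.
Definition ER_min (x y : ER) : ER := if ER_leb x y then x else y.

Lemma mid5_clamp a b c d e :
  ER_le a d -> ER_le a e -> ER_le b d -> ER_le b e ->
  mid5 a b c d e = ER_max (ER_max a b) (ER_min c (ER_min d e)).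
Proof.
  intros Had Hae Hbd Hbe.
  apply ER_leb_squash in Had, Hae, Hbd, Hbe.
  unfold mid5, ER_max, ER_min; simpl.
  repeat (match goal with |- context [ER_leb ?x ?y] =>
     lazymatch x with context [ER_leb] => fail | _ =>
     lazymatch y with context [ER_leb] => fail | _ =>
     destruct (ER_leb x y) eqn:? end end end; simpl);
  repeat match goal with
         | H : ER_leb _ _ = true |- _ => apply ER_leb_squash in H
         | H : ER_leb _ _ = false |- _ => apply ER_leb_false_squash in H end;
  try reflexivity; apply ER_squash_inj; lra.
Qed.

Definition Freal (u : R) : R := u / sqrt (1 - u ^ 2).

Lemma Freal_lt u v : -1 < u -> u < v -> v < 1 -> Freal u < Freal v.
Proof.
  intros H1 H2 H3. unfold Freal.
  assert (Pu : 0 < 1 - u^2) by nra. assert (Pv : 0 < 1 - v^2) by nra.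
  pose proof (sqrt_lt_R0 _ Pu) as Su. pose proof (sqrt_lt_R0 _ Pv) as Sv.
  pose proof (sqrt_sqrt _ (Rlt_le _ _ Pu)) as Eu.
  pose proof (sqrt_sqrt _ (Rlt_le _ _ Pv)) as Ev.
  set (su := sqrt (1 - u^2)) in *. set (sv := sqrt (1 - v^2)) in *.
  assert (Hcross : u * sv < v * su).
  { destruct (Rle_or_lt 0 u).
    - assert (sv < su) by nra. nra.
    - destruct (Rle_or_lt v 0).
      + assert (su < sv) by nra. nra.
      + nra. }
  apply Rmult_lt_reg_r with (su * sv); [nra|].
  replace (u / su * (su * sv)) with (u * sv) by (field; lra).
  replace (v / sv * (su * sv)) with (v * su) by (field; lra).
  lra.
Qed.

Lemma Freal_le_iff u v : -1 < u < 1 -> -1 < v < 1 -> (Freal u <= Freal v <-> u <= v).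
Proof.
  intros Hu Hv; split; intros H.
  - destruct (Rle_or_lt u v); auto. pose proof (Freal_lt v u); lra.
  - destruct H as [H| ->]; [left; apply Freal_lt|]; lra.
Qed.

Lemma Freal_inj u v : -1 < u < 1 -> -1 < v < 1 -> Freal u = Freal v -> u = v.
Proof.
  intros Hu Hv E.
  apply Rle_antisym; [apply (Freal_le_iff u v)|apply (Freal_le_iff v u)]; auto; lra.
Qed.

Lemma Freal_continuity_pt u : -1 < u < 1 -> continuity_pt Freal u.
Proof.
  intros Hu. unfold Freal.
  assert (P : 0 < 1 - u^2) by nra.
  apply continuity_pt_div.
  - apply derivable_continuous_pt, derivable_pt_id.
  - apply (continuity_pt_comp (fun v => 1 - v^2) sqrt).
    + apply derivable_continuous_pt. reg.
    + apply continuity_pt_sqrt. lra.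
  - pose proof (sqrt_lt_R0 _ P). lra.
Qed.

Lemma Fext_interior u : -1 < u < 1 -> Fext u = Fin (Freal u).
Proof.
  intros. unfold Fext. destruct Rlt_dec; try lra. destruct Rlt_dec; try lra. reflexivity.
Qed.

Lemma Fext_Fin_inv u v : Fext u = Fin v -> -1 < u < 1 /\ v = Freal u.
Proof.
  unfold Fext. destruct Rlt_dec; try discriminate. destruct Rlt_dec; try discriminate.
  intros H; inversion H; split; [lra|reflexivity].
Qed.

Lemma Fext_le u v : u <= v -> ER_le (Fext u) (Fext v).
Proof.
  intros H. unfold ER_le, Fext.
  destruct (Rlt_dec u 1), (Rlt_dec v 1); try lra; simpl; auto;
    destruct (Rlt_dec (-1) u), (Rlt_dec (-1) v); simpl; auto; try lra.
  destruct Rle_dec as [|Hn]; auto. exfalso; apply Hn, Freal_le_iff; lra.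
Qed.

Lemma Fext_le_iff u v : -1 < u < 1 \/ -1 < v < 1 -> (ER_le (Fext u) (Fext v) <-> u <= v).
Proof.
  intros Huv; split; [|apply Fext_le].
  intros Hle. destruct (Rle_or_lt u v) as [|Hvu]; auto. exfalso.
  assert (E : Fext u = Fext v).
  { apply ER_squash_inj, Rle_antisym; apply ER_leb_squash; [exact Hle|apply Fext_le; lra]. }
  destruct Huv as [Hu|Hv].
  - rewrite (Fext_interior u Hu) in E. symmetry in E.
    apply Fext_Fin_inv in E as [Hv E]. apply Freal_inj in E; auto; lra.
  - rewrite (Fext_interior v Hv) in E.
    apply Fext_Fin_inv in E as [Hu E]. apply Freal_inj in E; auto; lra.
Qed.

Lemma Fext_max u v : Fext (Rmax u v) = ER_max (Fext u) (Fext v).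
Proof.
  unfold Rmax, ER_max. destruct Rle_dec.
  - now rewrite Fext_le.
  - destruct (ER_leb (Fext u) (Fext v)) eqn:E; auto.
    apply ER_squash_inj, Rle_antisym; apply ER_leb_squash; auto. apply Fext_le; lra.
Qed.

Lemma Fext_min u v : Fext (Rmin u v) = ER_min (Fext u) (Fext v).
Proof.
  unfold Rmin, ER_min. destruct Rle_dec.
  - now rewrite Fext_le.
  - destruct (ER_leb (Fext u) (Fext v)) eqn:E; auto.
    apply ER_squash_inj, Rle_antisym; apply ER_leb_squash; auto. apply Fext_le; lra.
Qed.

Lemma sof_bounds r : -1 < sof r < 1.
Proof.
  unfold sof. assert (P : 0 < 1 + r^2) by nra.
  pose proof (sqrt_lt_R0 _ P) as S. pose proof (sqrt_sqrt _ (Rlt_le _ _ P)) as E.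
  set (s := sqrt (1 + r^2)) in *.
  assert (Habs : Rabs r < s).
  { apply Rsqr_incrst_0; try lra; [|apply Rabs_pos].
    rewrite <- Rsqr_abs. unfold Rsqr. nra. }
  revert Habs. unfold Rabs; destruct Rcase_abs; intros; split;
    (apply Rmult_lt_reg_r with s; [lra|]); unfold Rdiv; rewrite Rmult_assoc, Rinv_l by lra; lra.
Qed.

Lemma Freal_sof r : Freal (sof r) = r.
Proof.
  unfold Freal, sof. assert (P : 0 < 1 + r^2) by nra.
  pose proof (sqrt_lt_R0 _ P) as S. pose proof (sqrt_sqrt _ (Rlt_le _ _ P)) as E.
  set (s := sqrt (1 + r^2)) in *.
  assert (E2 : 1 - (r / s)^2 = (/ s)^2).
  { transitivity ((s * s - r ^ 2) / (s * s)); [field; lra|].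
    replace (s * s - r ^ 2) with 1 by lra. field; lra. }
  rewrite E2, sqrt_pow2 by (left; apply Rinv_0_lt_compat; lra). field; lra.
Qed.

Lemma Fext_sof r : Fext (sof r) = Fin r.
Proof. rewrite Fext_interior by apply sof_bounds. now rewrite Freal_sof. Qed.

Lemma lam_plus_eq k0 r0 rb c : 0 < k0 -> 0 <= c ->
  lam_plus k0 r0 rb c = Fext ((sof r0 + sof rb + k0 * c) / 2).
Proof.
  intros Hk Hc. set (U := (sof r0 + sof rb + k0 * c) / 2).
  pose proof (sof_bounds r0) as B0. pose proof (sof_bounds rb) as Bb.
  assert (HkC : 0 <= k0 * c) by nra.
  unfold lam_plus, meet_value.
  destruct (excluded_middle_informative _) as [H|H].
  - destruct (constructive_indefinite_description _ H) as [v [x [H1 H2]]]; simpl.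
    unfold g_plus, h_plus in H1, H2.
    apply Fext_Fin_inv in H1 as [B1 E1]. apply Fext_Fin_inv in H2 as [B2 E2].
    assert (k0 * x + sof r0 = - k0 * (x - c) + sof rb) by (apply Freal_inj; lra).
    replace U with (k0 * x + sof r0) by (unfold U; lra).
    rewrite Fext_interior; congruence.
  - destruct (Rlt_dec U 1) as [HU|HU].
    + exfalso. apply H. exists (Freal U), ((sof rb - sof r0 + k0 * c) / (2 * k0)).
      unfold g_plus, h_plus.
      replace (k0 * ((sof rb - sof r0 + k0 * c) / (2 * k0)) + sof r0) with U
        by (unfold U; field; lra).
      replace (- k0 * ((sof rb - sof r0 + k0 * c) / (2 * k0) - c) + sof rb) with U
        by (unfold U; field; lra).
      rewrite Fext_interior by (unfold U in *; lra). auto.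
    + unfold Fext. destruct Rlt_dec; [contradiction|reflexivity].
Qed.

Lemma lam_minus_eq k0 r0 rb c : 0 < k0 -> 0 <= c ->
  lam_minus k0 r0 rb c = Fext ((sof r0 + sof rb - k0 * c) / 2).
Proof.
  intros Hk Hc. set (L := (sof r0 + sof rb - k0 * c) / 2).
  pose proof (sof_bounds r0) as B0. pose proof (sof_bounds rb) as Bb.
  assert (HkC : 0 <= k0 * c) by nra.
  unfold lam_minus, meet_value.
  destruct (excluded_middle_informative _) as [H|H].
  - destruct (constructive_indefinite_description _ H) as [v [x [H1 H2]]]; simpl.
    unfold g_minus, h_minus in H1, H2.
    apply Fext_Fin_inv in H1 as [B1 E1]. apply Fext_Fin_inv in H2 as [B2 E2].
    assert (- k0 * x + sof r0 = k0 * (x - c) + sof rb) by (apply Freal_inj; lra).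
    replace L with (- k0 * x + sof r0) by (unfold L; lra).
    rewrite Fext_interior; congruence.
  - destruct (Rlt_dec (-1) L) as [HL|HL].
    + exfalso. apply H. exists (Freal L), ((sof r0 - sof rb + k0 * c) / (2 * k0)).
      unfold g_minus, h_minus.
      replace (- k0 * ((sof r0 - sof rb + k0 * c) / (2 * k0)) + sof r0) with L
        by (unfold L; field; lra).
      replace (k0 * ((sof r0 - sof rb + k0 * c) / (2 * k0) - c) + sof rb) with L
        by (unfold L; field; lra).
      rewrite Fext_interior by (unfold L in *; lra). auto.
    + unfold Fext. destruct Rlt_dec; [|lra]. destruct Rlt_dec; [contradiction|reflexivity].
Qed.

Lemma lam_bounds_iff k0 r0 rb mu c : 0 < k0 -> 0 <= c ->
  (ER_le (lam_minus k0 r0 rb c) (Fin mu) /\ ER_le (Fin mu) (lam_plus k0 r0 rb c)) <->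
  Rabs (2 * sof mu - sof r0 - sof rb) <= k0 * c.
Proof.
  intros Hk Hc.
  pose proof (sof_bounds r0). pose proof (sof_bounds rb). pose proof (sof_bounds mu).
  rewrite lam_minus_eq, lam_plus_eq, <- Fext_sof, !Fext_le_iff by (auto; lra).
  unfold Rabs; destruct Rcase_abs; split; intros; lra.
Qed.

Lemma Rpower_3_2 x : 0 < x -> Rpower x (3 / 2) = x * sqrt x.
Proof.
  intros. replace (3 / 2) with (1 + / 2) by field.
  now rewrite Rpower_plus, Rpower_1, Rpower_sqrt.
Qed.

Lemma derivable_pt_lim_sof y : derivable_pt_lim sof y (/ Rpower (1 + y ^ 2) (3 / 2)).
Proof.
  assert (P : 0 < 1 + y^2) by nra.
  pose proof (sqrt_lt_R0 _ P) as S. pose proof (sqrt_sqrt _ (Rlt_le _ _ P)) as E.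
  rewrite Rpower_3_2 by exact P.
  apply is_derive_Reals. unfold sof.
  auto_derive; replace (y * (y * 1)) with (y ^ 2) by ring.
  - repeat split; lra.
  - set (s := sqrt (1 + y^2)) in *.
    transitivity ((s * s - y^2) / (s * s * s)); [field; lra|]. rewrite E. field; lra.
Qed.

(* [sof r] is the sine of the angle of slope [r], and [|f'| <= k (1 + f^2)^(3/2)] says that
   this angle, hence its sine, moves at speed at most [k]. *)
Lemma sof_increment_le (k b : R) (f f' : R -> R) : 0 < b ->
  (forall x, 0 <= x <= b -> derivable_pt_lim f x (f' x)) ->
  (forall x, 0 <= x <= b -> Rabs (f' x) <= k * Rpower (1 + (f x) ^ 2) (3 / 2)) ->
  Rabs (sof (f b) - sof (f 0)) <= k * b.
Proof.
  intros Hb Hd Hbd.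
  set (P x := Rpower (1 + (f x) ^ 2) (3 / 2)).
  destruct (MVT_cor2 (fun x => sof (f x)) (fun x => f' x * / P x) 0 b Hb) as [t [Ht Htr]].
  { intros x Hx. rewrite Rmult_comm.
    apply (derivable_pt_lim_comp f sof); [apply Hd; lra|apply derivable_pt_lim_sof]. }
  rewrite Ht, Rabs_mult, Rabs_mult, Rminus_0_r, (Rabs_right b) by lra.
  assert (HP : 0 < P t) by (unfold P, Rpower; apply exp_pos).
  rewrite (Rabs_right (/ P t)) by (left; apply Rinv_0_lt_compat, HP).
  apply Rmult_le_compat_r; [lra|].
  apply Rmult_le_reg_r with (P t); [exact HP|].
  rewrite Rmult_assoc, Rinv_l by lra. rewrite Rmult_1_r. apply Hbd; lra.
Qed.

Lemma Rmax_eq_abs a b : Rmax a b = (a + b + Rabs (a - b)) / 2.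
Proof. unfold Rmax, Rabs; destruct Rle_dec; destruct Rcase_abs; lra. Qed.

Lemma Rmin_eq_abs a b : Rmin a b = (a + b - Rabs (a - b)) / 2.
Proof. unfold Rmin, Rabs; destruct Rle_dec; destruct Rcase_abs; lra. Qed.

Lemma continuity_pt_Rmax f g x : continuity_pt f x -> continuity_pt g x ->
  continuity_pt (fun y => Rmax (f y) (g y)) x.
Proof.
  intros Hf Hg.
  apply continuity_pt_ext with (f := fun y => (f y + g y + Rabs (f y - g y)) * / 2).
  { intros y. now rewrite Rmax_eq_abs. }
  apply (continuity_pt_mult _ (fun _ => / 2)); [|apply continuity_pt_const; now intros ? ?].
  apply continuity_pt_plus; [now apply continuity_pt_plus|].
  apply (continuity_pt_comp (fun y => f y - g y) Rabs);
    [now apply continuity_pt_minus|apply Rcontinuity_abs].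
Qed.

Lemma continuity_pt_Rmin f g x : continuity_pt f x -> continuity_pt g x ->
  continuity_pt (fun y => Rmin (f y) (g y)) x.
Proof.
  intros Hf Hg.
  apply continuity_pt_ext with (f := fun y => (f y + g y - Rabs (f y - g y)) * / 2).
  { intros y. now rewrite Rmin_eq_abs. }
  apply (continuity_pt_mult _ (fun _ => / 2)); [|apply continuity_pt_const; now intros ? ?].
  apply continuity_pt_minus; [now apply continuity_pt_plus|].
  apply (continuity_pt_comp (fun y => f y - g y) Rabs);
    [now apply continuity_pt_minus|apply Rcontinuity_abs].
Qed.

Section SineProfile.

Variables s0 sb m : R.

(* The median of [zeta], before applying [F], in the rescaled variables [T = k0 c], [t = k0 x]. *)
Definition sine_profile (T t : R) : R :=
  Rmax (Rmax (t - T + sb) (- t + s0)) (Rmin m (Rmin (t + s0) (- t + T + sb))).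

Ltac profile_cases :=
  unfold sine_profile, Rmax, Rmin, Rabs in *;
  repeat destruct Rle_dec; repeat destruct Rcase_abs; lra.

Lemma sine_profile_bounds T t : -1 < s0 < 1 -> -1 < sb < 1 -> -1 < m < 1 ->
  0 <= t <= T -> -1 < sine_profile T t < 1.
Proof. intros; profile_cases. Qed.

Lemma sine_profile_eq_iff T t : Rabs (sb - s0) <= T -> 0 <= t <= T ->
  sine_profile T t = m <-> Rabs (m - s0) <= t <= T - Rabs (m - sb).
Proof. intros; split; intros; profile_cases. Qed.

Lemma sine_profile_left T T' t : Rabs (sb - s0) <= T -> T <= T' ->
  0 <= t <= T - Rabs (m - sb) -> sine_profile T' t = sine_profile T t.
Proof. intros; profile_cases. Qed.

Lemma sine_profile_right T T' t : Rabs (m - s0) + Rabs (m - sb) <= T -> T <= T' ->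
  T' - Rabs (m - sb) <= t <= T' -> sine_profile T' t = sine_profile T (t - (T' - T)).
Proof. intros; profile_cases. Qed.

Lemma sine_profile_continuity_pt T t : continuity_pt (sine_profile T) t.
Proof.
  assert (Haff : forall a c, continuity_pt (fun y => a * y + c) t)
    by (intros; apply derivable_continuous_pt; reg).
  unfold sine_profile.
  apply continuity_pt_Rmax; [apply continuity_pt_Rmax|apply continuity_pt_Rmin].
  - apply (continuity_pt_ext (fun y => 1 * y + (- T + sb))); [intros; ring|apply Haff].
  - apply (continuity_pt_ext (fun y => -1 * y + s0)); [intros; ring|apply Haff].
  - apply continuity_pt_const; now intros ? ?.
  - apply continuity_pt_Rmin.
    + apply (continuity_pt_ext (fun y => 1 * y + s0)); [intros; ring|apply Haff].
    + apply (continuity_pt_ext (fun y => -1 * y + (T + sb))); [intros; ring|apply Haff].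
Qed.

End SineProfile.

Lemma Rabs_dist_sum_le a b m T :
  Rabs (b - a) <= T -> Rabs (2 * m - a - b) <= T -> Rabs (m - a) + Rabs (m - b) <= T.
Proof. unfold Rabs; intros; repeat destruct Rcase_abs; lra. Qed.

Lemma Rabs_sub_le_dist_sum a b m : Rabs (b - a) <= Rabs (m - a) + Rabs (m - b).
Proof. unfold Rabs; repeat destruct Rcase_abs; lra. Qed.

Section Zeta.

Variables k0 r0 rb mu : R.
Hypothesis Hk : 0 < k0.

Local Notation s0 := (sof r0).
Local Notation sb := (sof rb).
Local Notation m := (sof mu).

Lemma zeta_eq_profile c x : Rabs (sb - s0) <= k0 * c -> 0 <= x <= c ->
  zeta k0 r0 rb mu c x = Fin (Freal (sine_profile s0 sb m (k0 * c) (k0 * x))).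
Proof.
  intros Hc Hx.
  assert (Ht : 0 <= k0 * x <= k0 * c) by (split; nra).
  pose proof (sof_bounds r0). pose proof (sof_bounds rb). pose proof (sof_bounds mu).
  unfold zeta, h_minus, g_minus, g_plus, h_plus.
  rewrite <- (Fext_sof mu).
  rewrite mid5_clamp by (apply Fext_le; unfold Rabs in Hc; destruct Rcase_abs; lra).
  repeat (rewrite <- Fext_max || rewrite <- Fext_min).
  rewrite <- Fext_interior by (apply sine_profile_bounds; auto).
  f_equal; unfold sine_profile; f_equal; [f_equal|f_equal; f_equal]; ring.
Qed.

Let zeta_profile c x := Freal (sine_profile s0 sb m (k0 * c) (k0 * x)).

Lemma ex_RInt_zeta_profile c u v : 0 <= u -> u <= v -> v <= c ->
  ex_RInt (zeta_profile c) u v.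
Proof.
  intros Hu Huv Hv. apply (@ex_RInt_continuous R_CompleteNormedModule). intros x Hx.
  rewrite Rmin_left, Rmax_right in Hx by lra.
  apply continuity_pt_filterlim, (continuity_pt_comp _ Freal).
  - apply (continuity_pt_comp (fun y => k0 * y)); [apply derivable_continuous_pt; reg|].
    apply sine_profile_continuity_pt.
  - apply Freal_continuity_pt, sine_profile_bounds; try apply sof_bounds. split; nra.
Qed.

Lemma RInt_zeta_profile_diff b c : Rabs (m - s0) + Rabs (m - sb) <= k0 * b -> 0 <= b <= c ->
  RInt (zeta_profile c) 0 c - RInt (zeta_profile b) 0 b = mu * (c - b).
Proof.
  intros Hm Hbc.
  pose proof (Rabs_sub_le_dist_sum s0 sb m) as Hsb.
  pose proof (Rabs_pos (m - s0)). pose proof (Rabs_pos (m - sb)).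
  assert (Hkbc : k0 * b <= k0 * c) by nra.
  (* [qb] is where the plateau of [zeta_profile b] ends. *)
  set (qb := b - Rabs (m - sb) / k0). set (qc := c - Rabs (m - sb) / k0).
  assert (Eqb : k0 * qb = k0 * b - Rabs (m - sb)) by (unfold qb; field; lra).
  assert (Eqc : k0 * qc = k0 * c - Rabs (m - sb)) by (unfold qc; field; lra).
  assert (Hqb : 0 <= qb <= b) by (split; nra).
  assert (Hq : qc - qb = c - b) by (unfold qc, qb; ring).
  rewrite <- (RInt_Chasles (zeta_profile c) 0 qb c),
    <- (RInt_Chasles (zeta_profile c) qb qc c), <- (RInt_Chasles (zeta_profile b) 0 qb b)
    by (apply ex_RInt_zeta_profile; lra).
  assert (Ileft : RInt (zeta_profile c) 0 qb = RInt (zeta_profile b) 0 qb).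
  { apply RInt_ext. intros x Hx. rewrite Rmin_left, Rmax_right in Hx by lra.
    unfold zeta_profile. f_equal. apply sine_profile_left; try lra. split; nra. }
  assert (Imid : RInt (zeta_profile c) qb qc = mu * (c - b)).
  { rewrite (RInt_ext _ (fun _ => mu)), RInt_const.
    - rewrite Hq. apply Rmult_comm.
    - intros x Hx. rewrite Rmin_left, Rmax_right in Hx by lra.
      assert (Hflat : sine_profile s0 sb m (k0 * c) (k0 * x) = m).
      { apply sine_profile_eq_iff; [lra|split; nra|split; nra]. }
      unfold zeta_profile. rewrite Hflat. apply Freal_sof. }
  assert (Iright : RInt (zeta_profile c) qc c = RInt (zeta_profile b) qb b).
  { pose proof (RInt_comp_lin (zeta_profile b) 1 (- (c - b)) qc c) as Hlin.
    replace (1 * qc + - (c - b)) with qb in Hlin by lra.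
    replace (1 * c + - (c - b)) with b in Hlin by ring.
    rewrite <- Hlin by (apply ex_RInt_zeta_profile; lra).
    apply RInt_ext. intros x Hx. rewrite Rmin_left, Rmax_right in Hx by lra.
    change (scal 1 ?y) with (1 * y). rewrite Rmult_1_l. unfold zeta_profile. f_equal.
    replace (k0 * (1 * x + - (c - b))) with (k0 * x - (k0 * c - k0 * b)) by ring.
    apply sine_profile_right; try lra. split; nra. }
  rewrite Ileft, Imid, Iright. unfold plus; simpl. ring.
Qed.

Lemma zetaR_integral_identity b c : Rabs (m - s0) + Rabs (m - sb) <= k0 * b -> 0 <= b <= c ->
  exists (pc : Riemann_integrable (zetaR k0 r0 rb mu c) 0 c)
         (pb : Riemann_integrable (zetaR k0 r0 rb mu b) 0 b),
    RiemannInt pc - RiemannInt pb = mu * (c - b).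
Proof.
  intros Hm Hbc.
  pose proof (Rabs_sub_le_dist_sum s0 sb m) as Hsb.
  assert (Hprofile : forall d, b <= d ->
            forall x, Rmin 0 d < x < Rmax 0 d -> zeta_profile d x = zetaR k0 r0 rb mu d x).
  { intros d Hd x Hx. rewrite Rmin_left, Rmax_right in Hx by lra.
    unfold zetaR. rewrite zeta_eq_profile; [reflexivity|nra|lra]. }
  assert (Hint : forall d, b <= d -> ex_RInt (zetaR k0 r0 rb mu d) 0 d).
  { intros d Hd. apply (ex_RInt_ext (zeta_profile d));
      [now apply Hprofile|apply ex_RInt_zeta_profile; lra]. }
  exists (ex_RInt_Reals_0 _ _ _ (Hint c ltac:(lra))),
    (ex_RInt_Reals_0 _ _ _ (Hint b ltac:(lra))).
  rewrite <- !RInt_Reals, <- (RInt_ext _ _ _ _ (Hprofile c ltac:(lra))),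
    <- (RInt_ext _ _ _ _ (Hprofile b ltac:(lra))).
  now apply RInt_zeta_profile_diff.
Qed.

Lemma zeta_level_set b c : Rabs (m - s0) + Rabs (m - sb) <= k0 * b -> 0 <= b <= c ->
  exists p q : R, p <= q /\ c - b <= q - p /\
    forall x, (0 <= x <= c /\ zeta k0 r0 rb mu c x = Fin mu) <-> p <= x <= q.
Proof.
  intros Hm Hbc.
  pose proof (Rabs_sub_le_dist_sum s0 sb m) as Hsb.
  pose proof (Rabs_pos (m - s0)). pose proof (Rabs_pos (m - sb)).
  pose proof (sof_bounds r0). pose proof (sof_bounds rb). pose proof (sof_bounds mu).
  assert (Hkbc : k0 * b <= k0 * c) by nra.
  exists (Rabs (m - s0) / k0), (c - Rabs (m - sb) / k0).
  assert (Ep : k0 * (Rabs (m - s0) / k0) = Rabs (m - s0)) by (field; lra).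
  assert (Eq : k0 * (c - Rabs (m - sb) / k0) = k0 * c - Rabs (m - sb)) by (field; lra).
  split; [nra|split; [nra|]].
  intros x; split.
  - intros [Hx Hz]. rewrite zeta_eq_profile in Hz by (lra || nra).
    injection Hz as Hz.
    assert (Hflat : sine_profile s0 sb m (k0 * c) (k0 * x) = m).
    { apply Freal_inj; [apply sine_profile_bounds; auto; split; nra|auto|].
      now rewrite Freal_sof. }
    apply sine_profile_eq_iff in Hflat; [|lra|split; nra].
    split; nra.
  - intros Hx. assert (Hx' : 0 <= x <= c) by (split; nra).
    split; [exact Hx'|].
    rewrite zeta_eq_profile by (lra || nra).
    assert (Hflat : sine_profile s0 sb m (k0 * c) (k0 * x) = m).
    { apply sine_profile_eq_iff; [lra|split; nra|split; nra]. }
    now rewrite Hflat, Freal_sof.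
Qed.

End Zeta.

Theorem lemma2p6 (k0 r0 rb b c mu : R)
  (Hk0 : 0 < k0 < 1)
  (Hf : exists f f' : R -> R,
      (forall x, 0 <= x <= b -> derivable_pt_lim f x (f' x)) /\
      (forall x, 0 <= x <= b ->
         Rabs (f' x) <= k0 * Rpower (1 + (f x) ^ 2) (3 / 2)) /\
      f 0 = r0 /\ f b = rb)
  (Hb : 0 < b) (Hbc : b <= c)
  (Hmu : ER_le (lam_minus k0 r0 rb b) (Fin mu) /\ ER_le (Fin mu) (lam_plus k0 r0 rb b)) :
  (* zeta_(mu,c) is defined *)
  (ER_le (lam_minus k0 r0 rb c) (Fin mu) /\ ER_le (Fin mu) (lam_plus k0 r0 rb c)) /\
  (forall x, 0 <= x <= c -> exists v : R, zeta k0 r0 rb mu c x = Fin v) /\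
  (* integral identity *)
  (exists (pc : Riemann_integrable (zetaR k0 r0 rb mu c) 0 c)
          (pb : Riemann_integrable (zetaR k0 r0 rb mu b) 0 b),
      RiemannInt pc - RiemannInt pb = mu * (c - b)) /\
  (* level set {x in [0,c] | zeta(x) = mu} is a closed interval of length >= c - b *)
  (exists p q : R, p <= q /\ c - b <= q - p /\
      forall x, (0 <= x <= c /\ zeta k0 r0 rb mu c x = Fin mu) <-> p <= x <= q).
Proof.
  destruct Hk0 as [Hk _].
  destruct Hf as [f [f' [Hd [Hbd [Hf0 Hfb]]]]].
  assert (Hinc : Rabs (sof rb - sof r0) <= k0 * b).
  { rewrite <- Hf0, <- Hfb. exact (sof_increment_le k0 b f f' Hb Hd Hbd). }
  assert (Hmu_b : Rabs (2 * sof mu - sof r0 - sof rb) <= k0 * b)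
    by (apply lam_bounds_iff; auto; lra).
  assert (Hm : Rabs (sof mu - sof r0) + Rabs (sof mu - sof rb) <= k0 * b)
    by (now apply Rabs_dist_sum_le).
  assert (Hkbc : k0 * b <= k0 * c) by nra.
  split; [|split; [|split]].
  - apply lam_bounds_iff; lra.
  - intros x Hx. eexists. apply zeta_eq_profile; auto; lra.
  - apply zetaR_integral_identity; auto; lra.
  - apply zeta_level_set; auto; lra.
Qed.
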